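(* A game $\mathcal{M}\subseteq\mathbb{N}_0$ (dimension $d=1$) is reflexive if and only if $\mathcal{M}=\mathcal{M}_k$ for some $k\in\mathbb{N}_0$, where $\mathcal{M}_0=\varnothing$ and, for $k\ge1$, with $p_k=3k-1$, $$\mathcal{M}_k=\{\,ip_k+j:\ i\in\mathbb{N}_0,\ k\le j\le 2k-1\,\}.$$
   Context: A one-heap game is a set $\mathcal{M}\subseteq\mathbb{N}_0$ of moves; from position $x\in\mathbb{N}_0$ one may move to $y\in\mathbb{N}_0$ iff $x-y\in\mathcal{M}$. Misère play: a player who cannot move wins. If $0\in\mathcal{M}$, $P(\mathcal{M})=\varnothing$. Otherwise: a position is an N-position if it has no option or some option is a P-position; otherwise it is a P-position; $P(\mathcal{M})$ denotes the set of P-positions. The game $\mathcal{M}$ is reflexive if $P(\mathcal{M})=\mathcal{M}$. *)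

From Stdlib Require Import Arith Lia.

(* A one-heap game: a set of moves M ⊆ N0. *)
Definition game := nat -> Prop.

(* Course-of-values computation of P-positions: [Pupto M n x] decides whether
   x is a P-position, for x < n, assuming 0 ∉ M (so every option of x is < x).
   Misère convention: x is an N-position iff it has no option or some option
   is a P-position; otherwise it is a P-position. *)
Fixpoint Pupto (M : game) (n : nat) : nat -> Prop :=
  match n with
  | 0 => fun _ => False
  | S n' => fun x =>
      if x <? n' then Pupto M n' x
      else x = n' /\
           (exists m, M m /\ m <= x) /\
           (forall m, M m -> m <= x -> ~ Pupto M n' (x - m))
  end.

(* x ∈ P(M); by convention P(M) = ∅ when 0 ∈ M. *)
Definition Ppos (M : game) (x : nat) : Prop :=
  ~ M 0 /\ Pupto M (S x) x.

Definition reflexive (M : game) : Prop :=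
  forall x, Ppos M x <-> M x.

Definition Mk (k : nat) : game :=
  fun x => 1 <= k /\ exists i j, k <= j <= 2 * k - 1 /\ x = i * (3 * k - 1) + j.

From Stdlib Require Import Arith Lia Classical Wf_nat.

(* P(M) is the unique set S with S x <-> P_rule M S x, so M is reflexive iff M
   itself solves this recursion, i.e. M is sum-free and every x outside M that
   admits a move is the sum of two elements of M.  Such an M is determined by
   its least element k (strong induction), and M_k is such a set: its residues
   mod 3k-1 form the window [k, 2k-1], whose sumset [2k, 4k-2] misses the
   window modulo 3k-1 while every residue outside it is a sum of two window
   residues. *)

Definition P_rule (M : game) (S : nat -> Prop) (x : nat) : Prop :=
  ~ M 0 /\ (exists m, M m /\ m <= x) /\ (forall m, M m -> m <= x -> ~ S (x - m)).

Definition P_fixpoint (M : game) : Prop := forall x, M x <-> P_rule M M x.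

Lemma P_rule_ext (M : game) (S T : nat -> Prop) (x : nat) :
  (forall y, y < x -> (S y <-> T y)) -> (P_rule M S x <-> P_rule M T x).
Proof.
  intros ST; unfold P_rule.
  split; intros [M0 [Hmove Hno]]; repeat split; auto;
    intros m Hm Hmx Hy; apply (Hno m Hm Hmx);
    (assert (m <> 0) by (intros ->; contradiction));
    apply ST; auto; lia.
Qed.

Lemma P_rule_unique (M : game) (S T : nat -> Prop) :
  (forall x, S x <-> P_rule M S x) -> (forall x, T x <-> P_rule M T x) ->
  forall x, S x <-> T x.
Proof.
  intros HS HT x; induction x as [x IH] using (well_founded_induction lt_wf).
  rewrite HS, HT; exact (P_rule_ext M S T x IH).
Qed.

Lemma Pupto_stable (M : game) (n y : nat) : y < n -> (Pupto M n y <-> Pupto M (S y) y).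
Proof.
  induction n as [|n IH]; intros Hy; [lia|].
  destruct (Nat.eq_dec y n) as [->|Hne]; [tauto|].
  simpl Pupto at 1; replace (y <? n) with true by (symmetry; apply Nat.ltb_lt; lia).
  apply IH; lia.
Qed.

Lemma Ppos_P_rule (M : game) (x : nat) : Ppos M x <-> P_rule M (Ppos M) x.
Proof.
  unfold Ppos, P_rule; simpl Pupto; rewrite Nat.ltb_irrefl.
  assert (below : forall m, ~ M 0 -> M m -> m <= x ->
    Pupto M x (x - m) <-> Pupto M (S (x - m)) (x - m)).
  { intros m M0 Hm Hmx; apply Pupto_stable.
    assert (m <> 0) by (intros ->; contradiction); lia. }
  split.
  - intros [M0 [_ [Hmove Hno]]]; repeat split; auto.
    intros m Hm Hmx [_ Hp]; apply (Hno m Hm Hmx), below; auto.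
  - intros [M0 [Hmove Hno]]; repeat split; auto.
    intros m Hm Hmx Hp; apply (Hno m Hm Hmx); split; [exact M0|].
    apply below; auto.
Qed.

Lemma reflexive_iff_P_fixpoint (M : game) : reflexive M <-> P_fixpoint M.
Proof.
  split; intros H x.
  - rewrite <- (H x), Ppos_P_rule.
    apply P_rule_ext; intros y _; apply H.
  - apply (P_rule_unique M (Ppos M) M); auto using Ppos_P_rule.
Qed.

Lemma P_fixpoint_not0 (M : game) : P_fixpoint M -> ~ M 0.
Proof. intros F M0; exact (proj1 (proj1 (F 0) M0) M0). Qed.

Lemma P_fixpoint_ext (M N : game) :
  (forall x, M x <-> N x) -> P_fixpoint M -> P_fixpoint N.
Proof.
  intros MN F x; rewrite <- (MN x), (F x); unfold P_rule.
  split; intros [M0 [[m [Hm Hmx]] Hno]]; repeat split.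
  - now rewrite <- MN.
  - exists m; now rewrite <- MN.
  - intros m' Hm' Hmx'; rewrite <- !MN in *; auto.
  - now rewrite MN.
  - exists m; now rewrite MN.
  - intros m' Hm' Hmx'; rewrite !MN in *; auto.
Qed.

Lemma P_fixpoint_eq_of_agree_upto (M N : game) (a : nat) :
  P_fixpoint M -> P_fixpoint N -> M a -> (forall x, x <= a -> (M x <-> N x)) ->
  forall x, M x <-> N x.
Proof.
  intros FM FN Ma Hle x.
  induction x as [x IH] using (well_founded_induction lt_wf).
  destruct (le_lt_dec x a) as [Hxa|Hax]; [auto|].
  pose proof (P_fixpoint_not0 M FM) as M0; pose proof (P_fixpoint_not0 N FN) as N0.
  assert (Na : N a) by (apply Hle; auto).
  rewrite (FM x), (FN x); unfold P_rule.
  (* The move m = x always leads to 0; every other move only involves smaller values. *)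
  split; intros [_ [_ Hno]]; (split; [assumption|]);
    (split; [exists a; split; [assumption|lia]|]);
    intros m Hm Hmx Hy;
    (destruct (Nat.eq_dec m x) as [->|Hmx']; [rewrite Nat.sub_diag in Hy; contradiction|]);
    (assert (m <> 0) by (intros ->; contradiction));
    apply (Hno m); try apply IH; auto; lia.
Qed.

Lemma exists_least (M : game) : (exists a, M a) -> exists a, M a /\ forall y, M y -> a <= y.
Proof.
  intros Hex.
  destruct (dec_inh_nat_subset_has_unique_least_element M (fun n => classic (M n)) Hex)
    as [a [Ha _]].
  now exists a.
Qed.

Lemma Mk_mod (k x : nat) : 1 <= k -> (Mk k x <-> k <= x mod (3 * k - 1) <= 2 * k - 1).
Proof.
  intros Hk; unfold Mk; split.
  - intros [_ [i [j [Hj ->]]]].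
    rewrite <- (Nat.mod_unique (i * (3 * k - 1) + j) (3 * k - 1) i j); lia.
  - intros Hr; split; [exact Hk|].
    exists (x / (3 * k - 1)), (x mod (3 * k - 1)); split; [exact Hr|].
    pose proof (Nat.div_mod_eq x (3 * k - 1)); lia.
Qed.

Lemma Mk_ge (k x : nat) : Mk k x -> k <= x.
Proof. intros [_ [i [j [Hj ->]]]]; nia. Qed.

Lemma Mk_self (k : nat) : 1 <= k -> Mk k k.
Proof. intros Hk; split; [exact Hk|]; exists 0, k; lia. Qed.

Lemma Mk_sum_free (k m y : nat) : Mk k m -> Mk k y -> ~ Mk k (m + y).
Proof.
  intros [Hk [i1 [j1 [Hj1 ->]]]] [_ [i2 [j2 [Hj2 ->]]]].
  rewrite (Mk_mod k _ Hk).
  destruct (lt_dec (j1 + j2) (3 * k - 1)).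
  - rewrite <- (Nat.mod_unique _ (3 * k - 1) (i1 + i2) (j1 + j2)); lia.
  - rewrite <- (Nat.mod_unique _ (3 * k - 1) (i1 + i2 + 1) (j1 + j2 - (3 * k - 1))); nia.
Qed.

Lemma Mk_sum_cover (k x : nat) : 1 <= k -> k <= x -> ~ Mk k x ->
  exists m, Mk k m /\ m <= x /\ Mk k (x - m).
Proof.
  intros Hk Hkx Hx; rewrite (Mk_mod k x Hk) in Hx.
  set (p := 3 * k - 1) in *.
  assert (Hp : p <> 0) by (unfold p; lia).
  pose proof (Nat.div_mod_eq x p) as Hdiv; pose proof (Nat.mod_upper_bound x p Hp).
  set (q := x / p) in *; set (r := x mod p) in *.
  destruct (le_lt_dec (2 * k) r).
  - (* residue r = (r - k) + k *)
    exists (q * p + (r - k)); repeat split; try lia.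
    + exists q, (r - k); unfold p in *; lia.
    + exists 0, k; lia.
  - (* residue r = (2k - 1) + (k + r) - p, borrowing one period *)
    destruct q as [|q]; [lia|].
    exists (q * p + (2 * k - 1)); repeat split; try nia.
    + exists q, (2 * k - 1); lia.
    + exists 0, (k + r); unfold p in *; nia.
Qed.

Lemma Mk_P_fixpoint (k : nat) : P_fixpoint (Mk k).
Proof.
  intro x; unfold P_rule.
  assert (Mk0 : ~ Mk k 0) by (intros H; pose proof (Mk_ge k 0 H); destruct H; lia).
  split.
  - intros Hx; repeat split; [exact Mk0| now exists x |].
    intros m Hm Hmx Hy; apply (Mk_sum_free k m (x - m) Hm Hy).
    now replace (m + (x - m)) with x by lia.
  - intros [_ [[m0 [Hm0 Hm0x]] Hno]].
    apply NNPP; intros Hx.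
    assert (Hk : 1 <= k) by apply Hm0.
    pose proof (Mk_ge k m0 Hm0).
    destruct (Mk_sum_cover k x Hk ltac:(lia) Hx) as [m [Hm [Hmx Hy]]].
    exact (Hno m Hm Hmx Hy).
Qed.

Theorem theorem6 (M : game) :
  reflexive M <-> exists k : nat, forall x : nat, M x <-> Mk k x.
Proof.
  rewrite reflexive_iff_P_fixpoint; split.
  - intros F.
    destruct (classic (exists a, M a)) as [Hex|Hempty].
    + destruct (exists_least M Hex) as [a [Ma Hleast]].
      assert (a <> 0) by (intros ->; exact (P_fixpoint_not0 M F Ma)).
      exists a; apply (P_fixpoint_eq_of_agree_upto M (Mk a) a F (Mk_P_fixpoint a) Ma).
      intros x Hx; split; intros Hmx.
      * replace x with a by (pose proof (Hleast x Hmx); lia); apply Mk_self; lia.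
      * replace x with a by (pose proof (Mk_ge a x Hmx); lia); exact Ma.
    + exists 0; intros x; split; [intros Mx; exfalso; eauto | intros [H _]; lia].
  - intros [k Hk]; apply (P_fixpoint_ext (Mk k)); [firstorder | apply Mk_P_fixpoint].
Qed.
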